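(* Let $r\in\mathbb{N}$ and $w,v\in\mathbb{YF}^r$. Then $$d_r(w,v)=\sum_{l=0}^{h(w,v)} d_1(s(w),s(v),l)\cdot r^{\#v-\#w-e(v[l])}.$$
   Context: Fix $r\in\mathbb{N}$. Words and statistics. Consider finite words over $\{1_1,\dots,1_r,2\}$. A letter $1_i$ is a one with digit value $1$; $2$ is a two with digit value $2$. $|x|$ is the sum of digit values, $\#x$ the number of letters, $e(x)$ the number of ones. The graph $\mathbb{YF}^r$. It is the graded graph on all finite words, graded by $|\cdot|$. From $x$ there is a downward edge to every word obtained by one of two operations: (i) delete the leftmost one; (ii) replace a $2$ lying left of the leftmost one (any $2$ if there are no ones) by $1_i$, with arbitrary $i$. $\mathbb{YF}=\mathbb{YF}^1$ (with $1:=1_1$). The map $s$ replaces every $1_i$ by $1$. Path counts. $d_r(x,y)$ is the number of downward paths $y=y_n\to\dots\to y_m=x$ with $|y_i|=i$. Suffix notation. $h(w,v)$ is the number of letters of the longest common suffix of $w,v$; $1_i\neq1_j$ for $i\ne j$. $x[l]$ is $x$ with its last $l$ letters deleted. The restricted path count $d_1(x,y,l)$. For $x,y\in\mathbb{YF}$ with common suffix $u$ of $l$ letters, $d_1(x,y,l)$ is the number of downward paths $y=y_nu\to\dots\to y_mu=x$ in $\mathbb{YF}$ with $|y_i|=i$ such that the words $y_i$ do not all end with the same letter. *)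

From mathcomp Require Import all_boot all_order all_algebra.
Set Implicit Arguments. Unset Strict Implicit. Unset Printing Implicit Defensive.

(* Letters of YF^r: [None] is the letter 2, [Some i] (i : 'I_r) is the one 1_i.
   YF = YF^1 (letters option 'I_1). *)
Notation letter r := (option 'I_r).
Notation word r := (seq (letter r)).

Definition is_one (r : nat) (a : letter r) : bool := if a is Some _ then true else false.

Definition digit (r : nat) (a : letter r) : nat := if a is Some _ then 1 else 2.
Definition weight (r : nat) (x : word r) : nat := sumn (map (@digit r) x).
Definition nletters (r : nat) (x : word r) : nat := size x.
Definition nones (r : nat) (x : word r) : nat := count (@is_one r) x.

(* All words reached from x by one downward edge:
   (i) delete the leftmost one (position [find is_one x]);
   (ii) replace a 2 at a position j left of the leftmost one (all letters there
        are 2's; j ranges over all positions if there are no ones) by 1_i. *)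
Definition children (r : nat) (x : word r) : seq (word r) :=
  let k := find (@is_one r) x in
  (if has (@is_one r) x then [:: take k x ++ drop k.+1 x] else [::]) ++
  [seq take j x ++ Some i :: drop j.+1 x | j <- iota 0 k, i <- enum 'I_r].

Fixpoint dpaths (r : nat) (k : nat) (y : word r) : seq (seq (word r)) :=
  match k with
  | 0 => [:: [:: y]]
  | k'.+1 => flatten [seq [seq y :: p | p <- dpaths k' z] | z <- children y]
  end.

(* d_r(x,y): number of downward paths y = y_n -> ... -> y_m = x with |y_i| = i.
   Every edge lowers the weight by exactly 1, so these are the paths with
   |y| - |x| steps ending at x. *)
Definition dr (r : nat) (x y : word r) : nat :=
  count (fun p => last y p == x) (dpaths (weight y - weight x) y).

Definition sYF (r : nat) (x : word r) : word 1 :=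
  map (fun a : letter r => if a is Some _ then Some (ord0 : 'I_1) else None) x.

Fixpoint lcp (T : eqType) (s t : seq T) : nat :=
  match s, t with
  | a :: s', b :: t' => if a == b then (lcp s' t').+1 else 0
  | _, _ => 0
  end.
Definition h (r : nat) (w v : word r) : nat := lcp (rev w) (rev v).

Definition cut (r : nat) (x : word r) (l : nat) : word r := take (size x - l) x.

Definition ends_with (r : nat) (a : letter r) (s : word r) : bool :=
  (0 < size s) && (last a s == a).

(* d_1(x,y,l): u = the last l letters of x; number of downward paths in YF
   y = y_n u -> ... -> y_m u = x (|y_i u| graded as above, every word of the
   path ends with u) such that the words y_i do not all end with the same letter. *)
Definition d1 (x y : word 1) (l : nat) : nat :=
  let u := drop (size x - l) x in
  count (fun p =>
    [&& last y p == x,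
        all (fun z => (l <= size z) && (drop (size z - l) z == u)) p &
        ~~ [exists a : letter 1, all (fun z => ends_with a (cut z l)) p]])
    (dpaths (weight y - weight x) y).

From mathcomp Require Import all_boot all_order all_algebra zify.
Import GRing.Theory Num.Theory.
Local Open Scope ring_scope.
Set Implicit Arguments. Unset Strict Implicit.

(* Map a path of YF^r to its image under s, a path of YF.  Fix a path of YF
   from s(v) to s(w) whose words share a suffix of exactly l letters and lift
   it to YF^r edge by edge from the top, by induction on its length.  Deleting
   the leftmost one lifts uniquely and replacing a 2 lifts in r ways, except
   that the index of a one surviving to w is forced by w.  The common suffix
   is never touched, so lifts ending at w exist only when l <= h(w,v), and then
   there are r^(#v - #w - e(v[l])) of them: the free choices are the created
   ones that are deleted later, and the other deleted ones are the e(v[l]) ones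
   of v[l].  Grouping the paths of YF by l gives the formula, as
   d1(s(w), s(v), l) counts those with common suffix of length exactly l. *)

Section LongestCommonPrefix.
Variable T : eqType.
Implicit Types s t u R W : seq T.

Lemma leq_lcp s t l :
  (l <= lcp s t)%N = [&& (l <= size s)%N, (l <= size t)%N & take l s == take l t].
Proof.
elim: s t l => [|a s IH] [|b t] [|l] //=; first by rewrite andbF.
case: eqP => [->|ne] /=; first by rewrite ltnS IH eqseq_cons eqxx.
by rewrite eqseq_cons (introF eqP ne) !andbF.
Qed.

Lemma lcp_nth s t l d : (l <= lcp s t)%N ->
  (l < lcp s t)%N = [&& (l < size s)%N, (l < size t)%N & nth d s l == nth d t l].
Proof.
by elim: s t l => [|a s IH] [|b t] [|l] //=; case: eqP => //= _; rewrite ?ltnS; apply: IH.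
Qed.

Lemma lcpss s : lcp s s = size s.
Proof. by elim: s => //= a s ->; rewrite eqxx. Qed.

Lemma lcpC s t : lcp s t = lcp t s.
Proof. by elim: s t => [|a s IH] [|b t] //=; rewrite eq_sym IH. Qed.

Lemma lcp_catl u s t : lcp (u ++ s) (u ++ t) = (size u + lcp s t)%N.
Proof. by elim: u => //= a u ->; rewrite eqxx. Qed.

Lemma leq_lcp_trans l s t u :
  (l <= lcp t u)%N -> (l <= lcp s u)%N = (l <= lcp s t)%N.
Proof. by rewrite !leq_lcp => /and3P[-> -> /eqP->]. Qed.

Lemma leq_lcp_catr m W R s :
  (m <= size R)%N -> (m <= lcp W (R ++ s))%N = (m <= lcp W R)%N.
Proof.
move=> mR; rewrite !leq_lcp takel_cat // size_cat mR.
by rewrite (leq_trans mR (leq_addr _ _)).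
Qed.

Lemma leq_lcp_cat_cons W R a s d : (size R < size W)%N ->
  ((size R).+1 <= lcp W (R ++ a :: s))%N = (size R <= lcp W R)%N && (nth d W (size R) == a).
Proof.
move=> RW; rewrite !leq_lcp size_cat /= addnS ltnS leq_addr RW (ltnW RW) leqnn /=.
rewrite (take_nth d RW) take_cat ltnNge leqnSn /= subSnn /= take0 cats1.
by rewrite take_size eqseq_rcons.
Qed.

End LongestCommonPrefix.

Lemma dropl_cat (T : Type) n (s1 s2 : seq T) :
  (n <= size s1)%N -> drop n (s1 ++ s2) = drop n s1 ++ s2.
Proof.
by rewrite drop_cat; case: ltngtP => // -> _; rewrite subnn drop0 drop_size.
Qed.

Lemma natr_count (R : pzSemiRingType) (T : Type) (a : pred T) (s : seq T) :
  (count a s)%:R = \sum_(x <- s) (a x)%:R :> R.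
Proof. by elim: s => [|x s IH]; rewrite ?big_nil ?big_cons //= natrD IH. Qed.

Definition set_letter (r : nat) (x : word r) j (a : letter r) : word r :=
  take j x ++ a :: drop j.+1 x.

Definition drop_first_one (r : nat) (x : word r) : word r :=
  take (find (@is_one r) x) x ++ drop (find (@is_one r) x).+1 x.

Section Words.
Variable r : nat.
Implicit Types x : word r.

Lemma hC x y : h x y = h y x.
Proof. exact: lcpC. Qed.

Lemma hss x : h x x = size x.
Proof. by rewrite /h lcpss size_rev. Qed.

Definition sletter (a : letter r) : letter 1 :=
  if a is Some _ then Some (ord0 : 'I_1) else None.

Lemma sYFE x : sYF x = map sletter x.
Proof. by []. Qed.

Lemma sYF_rev x : sYF (rev x) = rev (sYF x).
Proof. exact: map_rev. Qed.

Lemma sYF_drop n x : sYF (drop n x) = drop n (sYF x).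
Proof. exact: map_drop. Qed.

Lemma weight_sYF x : weight (sYF x) = weight x.
Proof. by elim: x => //= a x IH; rewrite /weight /= -/(weight _) IH; case: a. Qed.

(* Only a 2 is mapped to a 2 by s, so along a block of 2's of [V] agreement
   of the images under s is agreement. *)
Lemma leq_lcp_twos (W V : word r) n m :
  all (pred1 None) (drop n V) -> (m <= lcp (sYF W) (sYF V))%N ->
  (m <= lcp W V)%N = (minn n m <= lcp W V)%N.
Proof.
elim: V W n m => [|a V IH] [|b W] [|n] [|m] //=.
- move=> /andP[/eqP-> twos]; case: b => [b|] //=; rewrite !ltnS min0n.
  by rewrite -(drop0 V) in twos; move/(IH W 0 m twos); rewrite min0n.
- move=> twos; rewrite minnSS; case: (b =P a) => [->|_]; last by [].
  by rewrite !eqxx !ltnS; apply: IH.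
Qed.

Lemma childrenE x : children x =
  (if has (@is_one r) x then [:: drop_first_one x] else [::]) ++
  [seq set_letter x j (Some i) | j <- iota 0 (find (@is_one r) x), i <- enum 'I_r].
Proof. by []. Qed.

Lemma has_sYF x : has (@is_one 1) (sYF x) = has (@is_one r) x.
Proof. by rewrite has_map; apply: eq_has => -[]. Qed.

Lemma find_sYF x : find (@is_one 1) (sYF x) = find (@is_one r) x.
Proof. by rewrite find_map; apply: eq_find => -[]. Qed.

Lemma sYF_set_letter x j a : sYF (set_letter x j a) = set_letter (sYF x) j (sletter a).
Proof. by rewrite /set_letter !sYFE map_cat /= map_take map_drop. Qed.

Lemma sYF_drop_first_one x : sYF (drop_first_one x) = drop_first_one (sYF x).
Proof. by rewrite /drop_first_one find_sYF !sYFE map_cat /= map_take map_drop. Qed.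

Lemma take_find_one x j : (j <= find (@is_one r) x)%N -> take j x = nseq j None.
Proof. by elim: x j => [|[a|] x IH] [|j] //= /IH->. Qed.

Lemma set_letter_nth x j : (j < size x)%N -> set_letter x j (nth None x j) = x.
Proof. by move=> jx; rewrite /set_letter -drop_nth // cat_take_drop. Qed.

Lemma rev_set_letter x j a : (j <= find (@is_one r) x)%N ->
  rev (set_letter x j a) = rev (drop j.+1 x) ++ a :: nseq j None.
Proof.
by move=> jx; rewrite /set_letter rev_cat rev_cons cat_rcons take_find_one // rev_nseq.
Qed.

Lemma rev_drop_first_one x :
  rev (drop_first_one x) =
  rev (drop (find (@is_one r) x).+1 x) ++ nseq (find (@is_one r) x) None.
Proof. by rewrite /drop_first_one rev_cat take_find_one // rev_nseq. Qed.

End Words.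

Section Paths.
Variable r : nat.
Implicit Types x y z : word r.
Implicit Types P : seq (word r).

Lemma dpaths_head k y p : p \in dpaths k y -> exists P, p = y :: P.
Proof.
case: k => [|k] /=; first by rewrite inE => /eqP->; exists [::].
by case/flattenP=> _ /mapP[z _ ->] /mapP[P _ ->]; exists P.
Qed.

Lemma last_dpaths k y p x : p \in dpaths k y -> last x p = last y p.
Proof. by case/dpaths_head=> P ->. Qed.

Lemma big_dpathsS (M : nmodType) k y (F : seq (word r) -> M) :
  \sum_(p <- dpaths k.+1 y) F p = \sum_(z <- children y) \sum_(p <- dpaths k z) F (y :: p).
Proof. by rewrite big_flatten big_map; apply: eq_bigr => z _; rewrite big_map. Qed.

Fixpoint common_suffix P : nat :=
  match P with
  | [::] => 0
  | y :: P' => if P' is z :: _ then minn (h y z) (common_suffix P') else size y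
  end.

Lemma leq_common_suffix l y P :
  (l <= common_suffix (y :: P))%N = all (fun z => l <= h z (last y P))%N (y :: P).
Proof.
elim: P y => [|z P IH] y /=; first by rewrite hss andbT.
rewrite leq_min IH /=; case lz: (l <= h z (last z P))%N; last by rewrite !andbF.
by rewrite /h (leq_lcp_trans _ lz).
Qed.

Lemma common_suffix_dpaths k y p : p \in dpaths k y ->
  (common_suffix p <= h (last y p) y)%N.
Proof.
case/dpaths_head=> P ->; rewrite hC.
by have := leqnn (common_suffix (y :: P)); rewrite {1}leq_common_suffix => /andP[].
Qed.

Lemma common_suffix_cons k x y p : p \in dpaths k y ->
  common_suffix (x :: p) = minn (h x y) (common_suffix p).
Proof. by case/dpaths_head=> P ->. Qed.

Lemma suffix_eq_h l z x :
  (l <= size z)%N && (drop (size z - l) z == drop (size x - l) x) = (l <= h z x)%N.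
Proof.
rewrite /h leq_lcp !size_rev !take_rev (inj_eq (can_inj revK)).
case: (leqP l (size z)) => //= lz; case: (leqP l (size x)) => //= lx.
apply/negbTE/eqP => /(congr1 size); rewrite !size_drop subKn // (eqP (ltnW lx)) subn0.
by move=> e; move: lx; rewrite e ltnn.
Qed.

Lemma ends_with_cut a z l :
  ends_with a (cut z l) = (l < size z)%N && (nth a (rev z) l == a).
Proof.
rewrite /ends_with /cut size_takel ?leq_subr //.
case: (ltnP l (size z)) => lz; last by rewrite (eqP lz).
rewrite subn_gt0 lz /= -nth_last size_takel ?leq_subr // nth_take.
  by rewrite nth_rev // subnS.
by rewrite prednK ?subn_gt0.
Qed.

Lemma exists_ends_with_cut y P l : (l <= common_suffix (y :: P))%N ->
  [exists a, all (fun z => ends_with a (cut z l)) (y :: P)] =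
  (l < common_suffix (y :: P))%N.
Proof.
rewrite leq_common_suffix [(l < _)%N]leq_common_suffix => /allP lP.
set x := last y P; have xP : x \in y :: P by apply: mem_last.
apply/existsP/allP => [[a /allP aP] z zP | lP'].
- move: (aP z zP) (aP x xP); rewrite !ends_with_cut => /andP[lz /eqP ez] /andP[lx /eqP ex].
  by rewrite (lcp_nth a (lP z zP)) !size_rev lz lx ez ex eqxx.
- exists (nth None (rev x) l); apply/allP => z zP.
  move: (lP' z zP); rewrite (lcp_nth None (lP z zP)) !size_rev => /and3P[lz lx /eqP e].
  by rewrite ends_with_cut lz -e /=; apply/eqP/set_nth_default; rewrite size_rev.
Qed.

End Paths.

Lemma d1E (x y : word 1) l : d1 x y l =
  count (fun p => (last y p == x) && (common_suffix p == l)) (dpaths (weight y - weight x) y).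
Proof.
rewrite /d1; apply: eq_in_count => _ /dpaths_head[P ->].
case: eqP => // <-; rewrite !andTb.
have -> : all (fun z => (l <= size z)%N && (drop (size z - l) z ==
            drop (size (last y (y :: P)) - l) (last y (y :: P)))) (y :: P) =
          (l <= common_suffix (y :: P))%N.
  by rewrite leq_common_suffix; apply: eq_all => z; rewrite suffix_eq_h.
case: leqP => [lP | Pl]; last by rewrite ltn_eqF.
by rewrite andTb exists_ends_with_cut // eqn_leq lP andbT -leqNgt.
Qed.

Section Lifting.
Variable r : nat.
Hypothesis r_gt0 : (0 < r)%N.
Implicit Types v w R V W : word r.

(* For [V = rev v] and [W = rev w]: the number of lifts to YF^r, starting at
   [v] and ending at [w], of a path of YF from s(v) to s(w) whose common suffix
   has [m] letters.  Reversal turns common suffixes into common prefixes. *)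
Definition lift_weight V W m : rat :=
  if (m <= lcp W V)%N then
    r%:R ^ ((size V)%:Z - (size W)%:Z - (count (@is_one r) (drop m V))%:Z)
  else 0.

Lemma lift_weight_full V W : size W = size V -> lift_weight V W (size V) = (W == V)%:R.
Proof.
move=> sWV; rewrite /lift_weight leq_lcp sWV leqnn take_size take_oversize ?sWV //=.
by case: eqP => // _; rewrite drop_size subrr subr0 expr0z.
Qed.

Lemma count_drop_twos R j m :
  (size R <= m)%N -> count (@is_one r) (drop m (R ++ nseq j None)) = 0%N.
Proof. by move=> Rm; rewrite drop_cat ltnNge Rm /= drop_nseq count_nseq. Qed.

Lemma lift_weight_delete R a j W m :
  (m <= lcp (sYF W) (sYF (R ++ nseq j None)))%N ->
  lift_weight (R ++ nseq j None) W m =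
  lift_weight (R ++ Some a :: nseq j None) W (minn (size R) m).
Proof.
rewrite /lift_weight; case: (leqP m (size R)) => [mR | Rm] sm.
- rewrite !leq_lcp_catr //; case: ifP => // _.
  rewrite !dropl_cat // !count_cat /= count_nseq !size_cat /= size_nseq.
  congr (_ ^ _); lia.
- have twos : all (pred1 None) (drop (size R) (R ++ nseq j None)).
    by rewrite drop_size_cat // all_pred1_nseq.
  rewrite (leq_lcp_twos twos sm) (minn_idPl (ltnW Rm)).
  rewrite !leq_lcp_catr //; case: ifP => // _.
  rewrite count_drop_twos ?(ltnW Rm) // drop_size_cat //= count_nseq !size_cat /= size_nseq.
  congr (_ ^ _); lia.
Qed.

Lemma sum_lift_weight_replace R j W m :
  (m <= lcp (sYF W) (sYF R ++ Some ord0 :: nseq j None))%N ->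
  \sum_(i < r) lift_weight (R ++ Some i :: nseq j None) W m =
  lift_weight (R ++ None :: nseq j None) W (minn (size R) m).
Proof.
rewrite /lift_weight; case: (leqP m (size R)) => [mR | Rm] sm.
- under eq_bigr do rewrite leq_lcp_catr //.
  rewrite leq_lcp_catr //; case: ifP => _; last by rewrite big1.
  under eq_bigr do rewrite dropl_cat // count_cat /= size_cat /=.
  rewrite dropl_cat // count_cat /= size_cat /= sumr_const card_ord.
  have r_neq0 : (r%:R : rat) != 0 by rewrite pnatr_eq0 -lt0n.
  set x := (r%:R : rat) in r_neq0 *; rewrite -mulr_natl -/x.
  by rewrite -[X in X * _]expr1z -expfzDr //; congr (_ ^ _); lia.
- have lt_R_lcp := leq_trans Rm sm.
  move: (lt_R_lcp); rewrite (lcp_nth None (ltnW lt_R_lcp)) sYFE size_map => /and3P[RW _].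
  rewrite nth_cat size_map ltnn subnn (nth_map None) //=.
  case Wi0 : (nth None W (size R)) => [i0|] // _.
  have lcpE i : (m <= lcp W (R ++ Some i :: nseq j None))%N =
                (size R <= lcp W R)%N && (i0 == i).
    have twos : all (pred1 None) (drop (size R).+1 (R ++ Some i :: nseq j None)).
      by rewrite -cat_rcons drop_size_cat ?size_rcons // all_pred1_nseq.
    have sm_i : (m <= lcp (sYF W) (sYF (R ++ Some i :: nseq j None)))%N.
      by rewrite [sYF (_ ++ _)]sYFE map_cat /= map_nseq; apply: sm.
    by rewrite (leq_lcp_twos twos sm_i) (minn_idPl Rm) (leq_lcp_cat_cons _ _ None RW) Wi0.
  have countE i : count (@is_one r) (drop m (R ++ Some i :: nseq j None)) = 0%N.
    by rewrite -cat_rcons count_drop_twos ?size_rcons.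
  under eq_bigr do rewrite lcpE countE size_cat /=.
  rewrite leq_lcp_catr // drop_size_cat //= count_nseq size_cat /=.
  case: ifP => _ /=; last by rewrite big1.
  rewrite (bigD1 i0) //= eqxx big1 ?addr0 // => i /negbTE.
  by rewrite eq_sym => ->.
Qed.

Lemma lift_weight_drop_first_one v w m : has (@is_one r) v ->
  (m <= h (sYF w) (drop_first_one (sYF v)))%N ->
  lift_weight (rev (drop_first_one v)) (rev w) m =
  lift_weight (rev v) (rev w) (minn (h (sYF v) (drop_first_one (sYF v))) m).
Proof.
move=> has_v; rewrite -sYF_drop_first_one /h -!sYF_rev rev_drop_first_one.
set K := find _ v; set R := rev (drop K.+1 v).
have Kv : (K < size v)%N by rewrite -has_find.
have [a vK] : exists a, nth None v K = Some a.
  by move: (nth_find None has_v); case: nth => // a; exists a.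
have -> : rev v = R ++ Some a :: nseq K None.
  by rewrite -{1}(set_letter_nth Kv) vK rev_set_letter.
move=> sm; rewrite (lift_weight_delete a sm) !sYFE !map_cat lcp_catl size_map /= map_nseq.
by case: (K) => [|n]; rewrite addn0.
Qed.

Lemma sum_lift_weight_set_letter v w j m : (j < find (@is_one r) v)%N ->
  (m <= h (sYF w) (set_letter (sYF v) j (Some ord0)))%N ->
  \sum_(i < r) lift_weight (rev (set_letter v j (Some i))) (rev w) m =
  lift_weight (rev v) (rev w) (minn (h (sYF v) (set_letter (sYF v) j (Some ord0))) m).
Proof.
move=> jK; have jv : (j < size v)%N := leq_trans jK (find_size _ _).
have vj : nth None v j = None by move: (before_find None jK); case: nth.
under eq_bigr do rewrite rev_set_letter ?(ltnW jK) //.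
rewrite /h rev_set_letter ?find_sYF ?(ltnW jK) // -sYF_drop -!sYF_rev.
have -> : rev v = rev (drop j.+1 v) ++ None :: nseq j None.
  by rewrite -{1}(set_letter_nth jv) vj rev_set_letter // ltnW.
move=> sm; rewrite (sum_lift_weight_replace sm).
by rewrite !sYFE map_cat lcp_catl /= addn0 size_map.
Qed.

Lemma count_dpaths_lift k v w :
  ((count (fun p => last v p == w) (dpaths k v))%:R : rat) =
  \sum_(P <- dpaths k (sYF v))
     (last (sYF v) P == sYF w)%:R * lift_weight (rev v) (rev w) (common_suffix P).
Proof.
elim: k v => [|k IH] v.
  rewrite /= big_seq1 /= addn0 sYFE size_map -size_rev.
  have [->|vw] := eqVneq v w; first by rewrite !eqxx mul1r lift_weight_full ?eqxx.
  case: eqP => [svw|]; last by rewrite mul0r.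
  have size_wv : size (rev w) = size (rev v).
    by rewrite !size_rev -(size_map (@sletter r) v) svw sYFE size_map.
  by rewrite mul1r lift_weight_full // (inj_eq (can_inj revK)) eq_sym (negbTE vw).
rewrite natr_count big_dpathsS.
transitivity (\sum_(z <- children v) \sum_(P <- dpaths k (sYF z))
    (last (sYF z) P == sYF w)%:R * lift_weight (rev z) (rev w) (common_suffix P)).
  apply: eq_bigr => z _; rewrite -IH natr_count.
  by apply: eq_big_seq => p /(last_dpaths v) <-.
rewrite big_dpathsS !childrenE has_sYF find_sYF !big_cat; congr (_ + _).
  case: ifP => has_v; last by rewrite !big_nil.
  rewrite !big_seq1 sYF_drop_first_one; apply: eq_big_seq => P PP.
  rewrite (common_suffix_cons _ PP) /= (last_dpaths (sYF v) PP).
  case: eqP => [lastP|]; last by rewrite !mul0r.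
  by rewrite !mul1r lift_weight_drop_first_one // -lastP (common_suffix_dpaths PP).
rewrite !big_allpairs_dep; apply: eq_big_seq => j; rewrite mem_iota add0n => /andP[_ jK].
rewrite !big_enum big_ord1.
under eq_bigr do rewrite sYF_set_letter /=.
rewrite exchange_big; apply: eq_big_seq => P PP.
rewrite -mulr_sumr (common_suffix_cons _ PP) /= (last_dpaths (sYF v) PP).
case: eqP => [lastP|]; last by rewrite !mul0r.
by rewrite !mul1r sum_lift_weight_set_letter // -lastP (common_suffix_dpaths PP).
Qed.

Lemma lift_weight_rev v w m : lift_weight (rev v) (rev w) m =
  if (m <= h w v)%N then
    r%:R ^ ((nletters v)%:Z - (nletters w)%:Z - (nones (cut v m))%:Z)
  else 0.
Proof. by rewrite /lift_weight /h !size_rev drop_rev count_rev. Qed.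

End Lifting.

Theorem mainTheorem6 (r : nat) (hr : (0 < r)%N) (w v : word r) :
  ((dr w v)%:R : rat) =
  \sum_(0 <= l < (h w v).+1)
     (d1 (sYF w) (sYF v) l)%:R *
     (r%:R : rat) ^ ((nletters v)%:Z - (nletters w)%:Z - (nones (cut v l))%:Z).
Proof.
rewrite /dr count_dpaths_lift //.
under [in RHS]eq_bigr do rewrite d1E !weight_sYF natr_count mulr_suml.
rewrite exchange_big; apply: eq_bigr => P _.
case: eqP => _ /=; last by rewrite mul0r big1 // => l _; rewrite mul0r.
under eq_bigr do rewrite mulr_natl mulrb eq_sym.
by rewrite -big_mkcond big_nat1_eq mul1r lift_weight_rev ltnS.
Qed.
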